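(* Let $p$ be a prime and $A$ a commutative nilpotent $\mathbb{F}_p$-algebra of dimension $n$ with $A^p=0$; let $e$ be the integer with $A^e\ne0$, $A^{e+1}=0$. Let $i(A)$ be the number of ideals of $A$ and $s(A)$ the number of $\mathbb{F}_p$-subspaces of $A$. (1) If $e=2$, $p\ge3$ and $n\ge3$, then $i(A)\le \frac{2}{p}s(A)$. (2) If $e=3$, $p\ge3$ and $n\ge4$, then $i(A)\le\frac{2}{p^2}s(A)$.
   Context: Algebras are commutative, associative, not necessarily unital. *)

From HB Require Import structures.
From mathcomp Require Import all_boot all_order all_algebra.
Set Implicit Arguments. Unset Strict Implicit. Unset Printing Implicit Defensive.
Import Order.TTheory GRing.Theory Num.Theory.
Local Open Scope ring_scope.

(* An n-dimensional F_p-vector space is modelled as V := 'rV['F_p]_n. *)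
Definition is_comm_alg (p n : nat)
  (mul : 'rV['F_p]_n -> 'rV['F_p]_n -> 'rV['F_p]_n) : Prop :=
  [/\ (forall (a : 'F_p) (x y z : 'rV['F_p]_n),
          mul (a *: x + y) z = a *: mul x z + mul y z),
      (forall x y, mul x y = mul y x) &
      (forall x y z, mul x (mul y z) = mul (mul x y) z)].

Definition alg_pow (p n : nat)
  (mul : 'rV['F_p]_n -> 'rV['F_p]_n -> 'rV['F_p]_n) (k : nat)
  : {vspace 'rV['F_p]_n} :=
  (<< [seq foldl mul x (tval s) | x <- enum 'rV['F_p]_n,
                                   s <- enum [set: (k.-1).-tuple 'rV['F_p]_n]] >>)%VS.

Definition is_subspace (p n : nat) (U : {set 'rV['F_p]_n}) : bool :=
  [&& 0 \in U,
      [forall x in U, forall y in U, x + y \in U] &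
      [forall a : 'F_p, forall x in U, a *: x \in U]].

Definition is_ideal (p n : nat)
  (mul : 'rV['F_p]_n -> 'rV['F_p]_n -> 'rV['F_p]_n)
  (U : {set 'rV['F_p]_n}) : bool :=
  is_subspace U && [forall a, forall u in U, mul a u \in U].

Definition num_subspaces (p n : nat) : nat :=
  #|[set U : {set 'rV['F_p]_n} | is_subspace U]|.

Definition num_ideals (p n : nat)
  (mul : 'rV['F_p]_n -> 'rV['F_p]_n -> 'rV['F_p]_n) : nat :=
  #|[set U : {set 'rV['F_p]_n} | is_ideal mul U]|.

From HB Require Import structures.
From mathcomp Require Import all_boot all_order all_algebra.
From mathcomp Require Import zify.
Set Implicit Arguments. Unset Strict Implicit. Unset Printing Implicit Defensive.
Import Order.TTheory GRing.Theory Num.Theory.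
Local Open Scope ring_scope.

(* Every ideal is invariant under the multiplication map T = (x * _), so it suffices
   to bound the T-invariant subspaces for a suitable x.  For e = 2 (resp. e = 3, where
   polarization needs p odd) there are x and a whose chain a, T a, ... spans a
   subspace P of dimension k = e on which T is nilpotent of order k; put q = p.
   Classify the subspaces U by U :&: P:
   - U :&: P = 0, U != 0: the shears 1 + E (E maps into P and kills P) permute these,
     and for each such U at most a q^-(k-1) fraction of the shears make the image of U
     invariant; double counting bounds the invariant ones by q^-(k-1) of all of them;
   - U :&: P proper and nonzero: for invariant U, U :&: P is one of the k - 1 proper
     invariant subspaces X of P, and transvections fixing P send the U with U :&: P = X
     injectively, in q^(k-1) ways, to subspaces meeting P in #|X| vectors;
   - P \subset U: cutting by a hyperplane injects these into the U meeting P in a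
     fixed invariant hyperplane of P.
   Adding up gives q^(k-1) i(A) <= 2 s(A). *)

Lemma card_disjointU (T : finType) (A B : {set T}) :
  [disjoint A & B] -> #|A :|: B| = (#|A| + #|B|)%N.
Proof. by move=> hAB; apply/eqP; rewrite (leq_card_setU A B).2. Qed.

Lemma card_setId_sum (T : finType) (A : {set T}) (p : pred T) :
  #|[set x in A | p x]| = (\sum_(x in A) p x)%N.
Proof.
rewrite -sum1_card big_mkcond [RHS]big_mkcond; apply: eq_bigr => x _.
by rewrite inE; case: (x \in A); case: (p x).
Qed.

Lemma leq_card_fibers (T : finType) (A : {set T}) (f : T -> nat) k1 k2 : k1 != k2 ->
  (#|[set x in A | f x == k1]| + #|[set x in A | f x == k2]| <= #|A|)%N.
Proof.
move=> hk; rewrite -card_disjointU.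
  by apply: subset_leq_card; apply/subsetP=> x; rewrite !inE => /orP[] /andP[].
rewrite -setI_eq0; apply/eqP/setP=> x; rewrite !inE; apply/negbTE.
by apply: contra hk => /andP[/andP[_ /eqP <-] /andP[_ /eqP ->]].
Qed.

Section Subspaces.
Variables (F : finFieldType) (n : nat).
Local Notation V := 'rV[F]_n.
Implicit Types (U P : {set V}) (x y u v z : V) (w : 'cV[F]_n) (M : 'M[F]_n).

Definition subspace U : bool :=
  [&& 0 \in U, [forall x in U, forall y in U, x + y \in U] &
      [forall a : F, forall x in U, a *: x \in U]].

Definition subspaces : {set {set V}} := [set U | subspace U].

Lemma subspaceP U : reflect
  [/\ 0 \in U, {in U &, forall x y, x + y \in U} &
      forall a : F, {in U, forall x, a *: x \in U}]
  (subspace U).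
Proof.
apply: (iffP and3P) => [[h0 /forall_inP hD /forallP hZ]|[h0 hD hZ]]; split=> //.
- by move=> x y /hD /forall_inP; apply.
- by move=> a x; move/forall_inP: (hZ a); apply.
- by apply/forall_inP=> x hx; apply/forall_inP=> y; apply: hD.
- by apply/forallP=> a; apply/forall_inP=> x; apply: hZ.
Qed.

Section Closure.
Variables (U : {set V}) (hU : subspace U).

Lemma subspace0 : 0 \in U. Proof. by case/subspaceP: hU. Qed.
Lemma subspaceD : {in U &, forall x y, x + y \in U}.
Proof. by case/subspaceP: hU. Qed.
Lemma subspaceZ a : {in U, forall x, a *: x \in U}.
Proof. by case/subspaceP: hU. Qed.
Lemma subspaceN : {in U, forall x, - x \in U}.
Proof. by move=> x hx; rewrite -scaleN1r subspaceZ. Qed.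
Lemma subspaceB : {in U &, forall x y, x - y \in U}.
Proof. by move=> x y hx hy; rewrite subspaceD ?subspaceN. Qed.
Lemma subspaceDl x y : x \in U -> (x + y \in U) = (y \in U).
Proof.
move=> hx; apply/idP/idP=> [hxy|]; last exact: subspaceD.
by rewrite -(addKr x y) subspaceD ?subspaceN.
Qed.
Lemma subspaceDr x y : y \in U -> (x + y \in U) = (x \in U).
Proof. by move=> hy; rewrite addrC subspaceDl. Qed.
Lemma subspaceZK a x : a != 0 -> (a *: x \in U) = (x \in U).
Proof.
move=> ha; apply/idP/idP=> [|]; last exact: subspaceZ.
by move/(subspaceZ a^-1); rewrite scalerA mulVf ?scale1r.
Qed.
Lemma subspace_sum (I : finType) (c : I -> F) (f : I -> V) :
  (forall i, f i \in U) -> \sum_i c i *: f i \in U.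
Proof.
move=> hf; apply: (big_ind (fun y => y \in U)) => //; first exact: subspace0.
  exact: subspaceD.
by move=> i _; apply: subspaceZ.
Qed.
End Closure.

Lemma subspace_neq0P U : 0 \in U -> reflect (exists2 u, u \in U & u != 0) (U != [set 0]).
Proof.
move=> hU0; apply: (iffP idP) => [hU|[u hu hu0]].
  have : ~~ (U \subset [set 0]) by apply: contra hU => h; rewrite eqEsubset h sub1set.
  by case/subsetPn=> u hu; rewrite inE => hu0; exists u.
by apply: contraNneq hu0 => hU; move: hu; rewrite hU inE.
Qed.

Lemma scalerIv v s t : v != 0 -> s *: v = t *: v -> s = t.
Proof.
move=> hv /eqP; rewrite -subr_eq0 -scalerBl scaler_eq0 (negbTE hv) orbF subr_eq0.
by move/eqP.
Qed.

Lemma exists_notin U : (#|U| < #|F| ^ n)%N -> exists v, v \notin U.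
Proof.
move=> hU; apply/existsP; rewrite -negb_forall; apply: contraL hU => /forallP hall.
have -> : (#|F| ^ n = #|{: V}|)%N by rewrite card_mx mul1n.
by rewrite -leqNgt -cardsT; apply: subset_leq_card; apply/subsetP=> v _; apply: hall.
Qed.

Lemma subspace_set0 : subspace [set 0 : V].
Proof.
apply/subspaceP; split; first by rewrite inE.
  by move=> x y; rewrite !inE => /eqP-> /eqP->; rewrite addr0.
by move=> a x; rewrite !inE => /eqP->; rewrite scaler0.
Qed.

Definition invariants (T : V -> V) : {set {set V}} :=
  [set U | subspace U && [forall u in U, T u \in U]].

Lemma invariantsP T U :
  reflect (subspace U /\ {in U, forall u, T u \in U}) (U \in invariants T).
Proof. by rewrite inE; apply: (iffP andP) => -[hU /forall_inP]. Qed.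

Definition line z : {set V} := [set t *: z | t : F].

Lemma lineP z y : reflect (exists t, y = t *: z) (y \in line z).
Proof. by apply: (iffP imsetP) => [[t _ ->]|[t ->]]; exists t. Qed.

Lemma line_id z : z \in line z.
Proof. by apply/lineP; exists 1; rewrite scale1r. Qed.

Lemma line_scale t z : t *: z \in line z.
Proof. by apply/lineP; exists t. Qed.

Lemma subspace_line z : subspace (line z).
Proof.
apply/subspaceP; split; first by apply/lineP; exists 0; rewrite scale0r.
  by move=> _ _ /lineP[s ->] /lineP[t ->]; apply/lineP; exists (s + t); rewrite scalerDl.
by move=> c _ /lineP[s ->]; apply/lineP; exists (c * s); rewrite scalerA.
Qed.

Lemma line_neq0 z : z != 0 -> line z != [set 0].
Proof.
by move=> hz; apply/(subspace_neq0P (subspace0 (subspace_line z))); exists z; rewrite ?line_id.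
Qed.

Definition span2 u v : {set V} := [set st.1 *: u + st.2 *: v | st : F * F].

Lemma span2P u v y : reflect (exists s t, y = s *: u + t *: v) (y \in span2 u v).
Proof. by apply: (iffP imsetP) => [[[s t] _ ->]|[s [t ->]]]; [exists s, t|exists (s, t)]. Qed.

Lemma mem_span2 u v s t : s *: u + t *: v \in span2 u v.
Proof. by apply/span2P; exists s, t. Qed.

Lemma span2_l u v : u \in span2 u v.
Proof. by have := mem_span2 u v 1 0; rewrite scale1r scale0r addr0. Qed.

Lemma span2_r u v : v \in span2 u v.
Proof. by have := mem_span2 u v 0 1; rewrite scale1r scale0r add0r. Qed.

Lemma line_sub_span2 u v : line v \subset span2 u v.
Proof. by apply/subsetP=> _ /lineP[t ->]; have := mem_span2 u v 0 t; rewrite scale0r add0r. Qed.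

Lemma subspace_span2 u v : subspace (span2 u v).
Proof.
apply/subspaceP; split.
- by have := mem_span2 u v 0 0; rewrite !scale0r addr0.
- move=> _ _ /span2P[s [t ->]] /span2P[s' [t' ->]].
  by rewrite addrACA -!scalerDl mem_span2.
- by move=> k _ /span2P[s [t ->]]; rewrite scalerDr !scalerA mem_span2.
Qed.

Lemma card_span2 u v : (#|span2 u v| <= #|F| ^ 2)%N.
Proof. by apply: leq_trans (leq_imset_card _ _) _; rewrite card_prod mulnn. Qed.

Definition span3 u v z : {set V} :=
  [set st.1.1 *: u + st.1.2 *: v + st.2 *: z | st : F * F * F].

Lemma span3P u v z y :
  reflect (exists s t r, y = s *: u + t *: v + r *: z) (y \in span3 u v z).
Proof.
apply: (iffP imsetP) => [[[[s t] r] _ ->]|[s [t [r ->]]]]; first by exists s, t, r.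
by exists (s, t, r).
Qed.

Lemma mem_span3 u v z s t r : s *: u + t *: v + r *: z \in span3 u v z.
Proof. by apply/span3P; exists s, t, r. Qed.

Lemma span3_l u v z : u \in span3 u v z.
Proof. by have := mem_span3 u v z 1 0 0; rewrite scale1r !scale0r !addr0. Qed.

Lemma span2_sub_span3 u v z : span2 v z \subset span3 u v z.
Proof.
by apply/subsetP=> _ /span2P[t [r ->]]; have := mem_span3 u v z 0 t r; rewrite scale0r add0r.
Qed.

Lemma subspace_span3 u v z : subspace (span3 u v z).
Proof.
apply/subspaceP; split.
- by have := mem_span3 u v z 0 0 0; rewrite !scale0r !addr0.
- move=> _ _ /span3P[s [t [r ->]]] /span3P[s' [t' [r' ->]]].
  by rewrite addrACA -scalerDl addrACA -!scalerDl mem_span3.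
- by move=> k _ /span3P[s [t [r ->]]]; rewrite !scalerDr !scalerA mem_span3.
Qed.

Lemma card_span3 u v z : (#|span3 u v z| <= #|F| ^ 3)%N.
Proof.
by apply: leq_trans (leq_imset_card _ _) _; rewrite !card_prod -!mulnA !expnS expn0 muln1.
Qed.

Definition dotc y w : F := (y *m w) 0 0.

Lemma dotc0 w : dotc 0 w = 0.
Proof. by rewrite /dotc mul0mx mxE. Qed.
Lemma dotcD x y w : dotc (x + y) w = dotc x w + dotc y w.
Proof. by rewrite /dotc mulmxDl mxE. Qed.
Lemma dotcZ a y w : dotc (a *: y) w = a * dotc y w.
Proof. by rewrite /dotc -scalemxAl mxE. Qed.
Lemma dotcZr a y w : dotc y (a *: w) = a * dotc y w.
Proof. by rewrite /dotc -scalemxAr mxE. Qed.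
Lemma dotcDr y w w' : dotc y (w + w') = dotc y w + dotc y w'.
Proof. by rewrite /dotc mulmxDr mxE. Qed.

Lemma mulmx_dotc y w z : y *m (w *m z) = dotc y w *: z.
Proof. by rewrite mulmxA {1}[y *m w]mx11_scalar mul_scalar_mx. Qed.

Lemma dotc_eq0 y w : (y *m w == 0) = (dotc y w == 0).
Proof.
apply/eqP/eqP=> h; first by rewrite /dotc h mxE.
by apply/rowP=> i; rewrite ord1 [RHS]mxE.
Qed.

Lemma notsubmx_separate m (B : 'M[F]_(m, n)) v : ~~ (v <= B)%MS ->
  exists w, B *m w = 0 /\ dotc v w = 1.
Proof.
rewrite submxE => /eqP /rowP /eqfunP /forallPn [j /=].
rewrite [X in _ != X]mxE => hj.
exists (cokermx B *m (((v *m cokermx B) 0 j)^-1 *: delta_mx j 0)).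
split; first by rewrite mulmxA mulmx_coker mul0mx.
by rewrite /dotc mulmxA -scalemxAr mxE -colE [X in _ * X]mxE mulVf.
Qed.

Lemma subspace_separate P v : subspace P -> v \notin P ->
  exists w, {in P, forall y, dotc y w = 0} /\ dotc v w = 1.
Proof.
move=> hP hv; pose B := \matrix_(i < #|P|) enum_val i.
have rowB y : y \in P -> (y <= B)%MS.
  by move=> hy; rewrite -(enum_rankK_in hy hy) -[enum_val _](rowK (fun i => enum_val i)) row_sub.
have : ~~ (v <= B)%MS.
  apply: contra hv => /submxP[D ->]; rewrite mulmx_sum_row.
  by apply: subspace_sum => // i; rewrite rowK enum_valP.
case/notsubmx_separate=> w [hBw hvw]; exists w; split=> // y /rowB /submxP[D ->].
by apply/eqP; rewrite -dotc_eq0 -mulmxA hBw mulmx0.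
Qed.

Definition imgmx M U : {set V} := [set u *m M | u in U].

Lemma mem_imgmx M U u : u \in U -> u *m M \in imgmx M U.
Proof. exact: imset_f. Qed.

Lemma imgmx_set0 M : imgmx M [set 0] = [set 0].
Proof. by rewrite /imgmx imset_set1 mul0mx. Qed.

Lemma subspace_imgmx M U : subspace U -> subspace (imgmx M U).
Proof.
move=> hU; apply/subspaceP; split.
- by rewrite -(mul0mx _ M) mem_imgmx ?subspace0.
- move=> _ _ /imsetP[x hx ->] /imsetP[y hy ->].
  by rewrite -mulmxDl mem_imgmx ?subspaceD.
- move=> a _ /imsetP[x hx ->].
  by rewrite scalemxAl mem_imgmx ?subspaceZ.
Qed.

Lemma imgmx_comp M N U : imgmx M (imgmx N U) = imgmx (N *m M) U.
Proof. by rewrite /imgmx -imset_comp; apply: eq_imset => u /=; rewrite mulmxA. Qed.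

Lemma imgmx1 U : imgmx 1%:M U = U.
Proof. by rewrite /imgmx (eq_imset _ (@mulmx1 _ _ _)) imset_id. Qed.

Lemma card_imgmx M U : row_free M -> #|imgmx M U| = #|U|.
Proof. by move/(row_free_inj (m:=1))=> hM; apply: card_imset. Qed.

Lemma imgmx_inj M : row_free M -> injective (imgmx M).
Proof. by move/(row_free_inj (m:=1))=> hM U W; apply: imset_inj. Qed.

Definition tvmx w z : 'M[F]_n := 1%:M + w *m z.

Lemma tvmxE y w z : y *m tvmx w z = y + dotc y w *: z.
Proof. by rewrite mulmxDr mulmx1 mulmx_dotc. Qed.

Lemma tvmxK w z : dotc z w = 0 -> tvmx w z *m tvmx (- w) z = 1%:M.
Proof.
move=> hzw; have wzwz : w *m z *m (w *m z) = 0.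
  by rewrite -mulmxA mulmx_dotc hzw scale0r mulmx0.
by rewrite /tvmx mulmxDl mul1mx mulmxDr mulmx1 mulNmx mulmxN wzwz oppr0 addr0 subrK.
Qed.

Lemma tvmx_free w z : dotc z w = 0 -> row_free (tvmx w z).
Proof. by move=> h; rewrite row_free_unit; case: (mulmx1_unit (tvmxK h)). Qed.

End Subspaces.

Section RelativeToSubspace.
Variables (F : finFieldType) (n : nat).
Local Notation V := 'rV[F]_n.
Implicit Types (U W X : {set V}) (x y u v z : V) (w : 'cV[F]_n).
Variable P : {set V}.
Hypothesis hP : subspace P.

Definition meeting X : {set {set V}} := [set U | subspace U && (U :&: P == X)].

Definition trivmeet : {set {set V}} :=
  [set U | [&& subspace U, U :&: P == [set 0] & U != [set 0]]].

Definition partmeet : {set {set V}} :=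
  [set U | [&& subspace U, U :&: P != [set 0] & ~~ (P \subset U)]].

Definition supspaces : {set {set V}} := [set U | subspace U && (P \subset U)].

Lemma trivmeetP U : reflect
  [/\ subspace U, {in U, forall y, y \in P -> y = 0} & exists2 u, u \in U & u != 0]
  (U \in trivmeet).
Proof.
rewrite inE; apply: (iffP and3P) => -[hU hUP hU0]; split=> //.
- move=> y hy hyP; have : y \in U :&: P by rewrite inE hy hyP.
  by rewrite (eqP hUP) inE => /eqP.
- exact/(subspace_neq0P (subspace0 hU)).
- apply/eqP/setP=> y; rewrite !inE; apply/andP/eqP=> [[hy hyP]|->].
    exact: hUP.
  by rewrite subspace0 ?subspace0.
- exact/(subspace_neq0P (subspace0 hU)).
Qed.

Lemma card_subspaces_split : P != [set 0] ->
  (1 + #|trivmeet| + #|partmeet| + #|supspaces| <= #|subspaces F n|)%N.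
Proof.
move=> hP0.
have supP U : P \subset U -> (U :&: P == [set 0]) = false.
  by move/setIidPr->; apply/negbTE.
have d1 : [disjoint trivmeet & partmeet].
  rewrite -setI_eq0; apply/eqP/setP=> U; rewrite !inE.
  by case: (U :&: P == [set 0]); rewrite ?andbF.
have d2 : [disjoint trivmeet :|: partmeet & supspaces].
  rewrite -setI_eq0; apply/eqP/setP=> U; rewrite !inE.
  by case hPU: (P \subset U); rewrite ?(supP _ hPU) /= ?andbF.
have Z : [set 0] \notin trivmeet :|: partmeet :|: supspaces.
  rewrite !inE eqxx (setIidPl _) ?sub1set ?subspace0 //= eqxx /= andbF.
  rewrite subspace_set0 /=; apply: contra hP0 => h.
  by rewrite eqEsubset h sub1set subspace0.
have -> : (1 + #|trivmeet| + #|partmeet| + #|supspaces| =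
    #|[set 0%R : V] |: (trivmeet :|: partmeet :|: supspaces)|)%N.
  by rewrite cardsU1 Z (card_disjointU d2) (card_disjointU d1) !addnA.
apply: subset_leq_card; apply/subsetP=> U; rewrite !inE.
case/predU1P=> [->|]; first exact: subspace_set0.
by case/orP=> [/orP[]|] => [/and3P[]|/and3P[]|/andP[]].
Qed.

Lemma card_invariants_le (T : V -> V) (C : {set {set V}}) m :
  P != [set 0] -> {subset invariants T :&: partmeet <= C} ->
  (m <= #|trivmeet|)%N -> (m * #|invariants T :&: trivmeet| <= #|trivmeet|)%N ->
  (#|supspaces| <= #|C|)%N -> (m * #|C| <= #|partmeet|)%N ->
  (m * #|invariants T| <= 2 * #|subspaces F n|)%N.
Proof.
move=> hP0 hC hm htriv hsup hpart.
have cover : invariants T \subset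
    [set [set 0]] :|: (invariants T :&: trivmeet) :|: C :|: supspaces.
  apply/subsetP=> U hU; have /invariantsP[hUs _] := hU.
  rewrite !in_setU in_set1 in_setI hU /=.
  case: (eqVneq U [set 0]) => [//|hU0] /=.
  case: (boolP (P \subset U)) => hPU.
    by rewrite [U \in supspaces]inE hUs hPU orbT.
  case: (eqVneq (U :&: P) [set 0]) => hUP.
    by rewrite [U \in trivmeet]inE hUs hUP eqxx hU0.
  by rewrite hC ?orbT // in_setI hU [U \in partmeet]inE hUs hUP hPU.
have hinv : (#|invariants T| <=
    1 + #|invariants T :&: trivmeet| + #|C| + #|supspaces|)%N.
  apply: leq_trans (subset_leq_card cover) _.
  do 3![apply: leq_trans (leq_card_setU _ _).1 _; rewrite leq_add2r].
  by rewrite cards1.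
have hsplit := card_subspaces_split hP0.
have := leq_mul (leqnn m) hinv; have := leq_mul (leqnn m) hsup.
nia.
Qed.

Lemma card_trivmeet_ge (J : finType) (x : J -> V) v : v \notin P ->
  (forall j, x j \in P) -> injective x -> (#|J| <= #|trivmeet|)%N.
Proof.
move=> hv hxP hxinj.
have line_meet0 j t : t *: (v + x j) \in P -> t = 0.
  move=> h; apply: contraNeq hv => ht.
  by rewrite -(subspaceDr hP v (hxP j)) -(subspaceZK hP _ ht).
have f_inj : injective (fun j => line (v + x j)).
  move=> j j' /= he.
  have : v + x j \in line (v + x j') by rewrite -he; apply/lineP; exists 1; rewrite scale1r.
  case/lineP=> t ht; have t1 : t = 1.
    apply/eqP; rewrite -subr_eq0; apply/eqP/(line_meet0 j').
    by rewrite scalerBl scale1r -ht opprD addrACA subrr add0r subspaceB.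
  by apply: hxinj; move: ht; rewrite t1 scale1r => /addrI.
rewrite -(card_imset _ f_inj); apply: subset_leq_card.
apply/subsetP=> _ /imsetP[j _ ->]; apply/trivmeetP; split.
- exact: subspace_line.
- by move=> _ /lineP[t ->] /line_meet0 ->; rewrite scale0r.
- exists (v + x j); first by apply/lineP; exists 1; rewrite scale1r.
  by apply: contraNneq hv => /eqP; rewrite addr_eq0 => /eqP->; rewrite subspaceN.
Qed.

Lemma card_supspaces_le X a : subspace X -> X \subset P -> a \in P -> a \notin X ->
  {in P, forall y, exists t, y - t *: a \in X} -> (#|supspaces| <= #|meeting X|)%N.
Proof.
move=> hX hXP haP haX hdec.
have [th [hXth hath]] := subspace_separate hX haX.
pose f U := [set u in U | dotc u th == 0].
have subspace_f U : subspace U -> subspace (f U).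
  move=> hU; apply/subspaceP; rewrite /f; split.
  - by rewrite inE (subspace0 hU) dotc0 eqxx.
  - move=> x y; rewrite !inE dotcD => /andP[hx /eqP->] /andP[hy /eqP->].
    by rewrite addr0 eqxx subspaceD.
  - by move=> c x; rewrite !inE dotcZ => /andP[hx /eqP->]; rewrite mulr0 eqxx subspaceZ.
have dotc_proj u : dotc (u - dotc u th *: a) th = 0.
  by rewrite dotcD -scaleN1r !dotcZ hath mulN1r mulr1 subrr.
have memf U u : U \in supspaces -> (u \in U) = (u - dotc u th *: a \in f U).
  rewrite inE => /andP[hU hPU]; have haU := subsetP hPU a haP.
  by rewrite inE dotc_proj eqxx andbT subspaceDr // subspaceN // subspaceZ.
have f_inj : {in supspaces &, injective f}.
  by move=> U U' hU hU' he; apply/setP=> u; rewrite memf // he -memf.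
rewrite -(card_in_imset f_inj); apply: subset_leq_card.
apply/subsetP=> _ /imsetP[U hU ->]; have := hU; rewrite inE => /andP[hUs hPU].
rewrite inE subspace_f //=; apply/eqP/setP=> y; rewrite !inE.
have [hyP|hyP] := boolP (y \in P); last first.
  by rewrite andbF; apply/esym/negbTE; apply: contra hyP; apply: (subsetP hXP).
rewrite (subsetP hPU) //= andbT; apply/idP/idP=> [/eqP hy0|hyX]; last by rewrite hXth.
have [t hyt] := hdec y hyP; move: (hXth _ hyt).
rewrite dotcD -scaleN1r !dotcZ hath hy0 mulr1 add0r mulN1r => /eqP; rewrite oppr_eq0 => /eqP ht.
by move: hyt; rewrite ht scale0r subr0.
Qed.

Lemma tvmx_memP w z y : z \in P -> (y *m tvmx w z \in P) = (y \in P).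
Proof. by move=> hz; rewrite tvmxE subspaceDr ?subspaceZ. Qed.

Lemma imgmx_tvmxI w z U : z \in P ->
  imgmx (tvmx w z) U :&: P = imgmx (tvmx w z) (U :&: P).
Proof.
move=> hz; apply/setP=> y; rewrite inE; apply/andP/imsetP.
  by case=> /imsetP[u hu ->]; rewrite tvmx_memP // => huP; exists u; rewrite ?inE ?hu.
by case=> u; rewrite inE => /andP[hu huP] ->; rewrite mem_imgmx ?tvmx_memP.
Qed.

Lemma card_partmeet_ge (J : finType) (w : J -> 'cV[F]_n) (z : J -> V) X :
  (forall j, z j \in P) -> (forall j, dotc (z j) (w j) = 0) ->
  injective (fun j => imgmx (tvmx (w j) (z j)) X) ->
  X != [set 0] -> X \proper P ->
  (#|J| * #|meeting X| <= #|[set W in partmeet | #|W :&: P| == #|X|]|)%N.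
Proof.
move=> hzP hzw hinj hX0 hXP.
pose g (jU : J * {set V}) := imgmx (tvmx (w jU.1) (z jU.1)) jU.2.
have gP jU : jU.2 \in meeting X -> g jU :&: P = imgmx (tvmx (w jU.1) (z jU.1)) X.
  by rewrite inE => /andP[_ /eqP hUX]; rewrite imgmx_tvmxI // hUX.
have g_inj : {in setX [set: J] (meeting X) &, injective g}.
  move=> [j U] [j' U'] /setXP[_ hU] /setXP[_ hU'] he.
  have hj : j = j' by apply: hinj; rewrite /= -(gP (j, U)) // -(gP (j', U')) // he.
  by subst j'; congr (_, _); apply: imgmx_inj he; apply: tvmx_free.
rewrite -cardsT -cardsX -(card_in_imset g_inj); apply: subset_leq_card.
apply/subsetP=> _ /imsetP[[j U] /setXP[_ hU] ->].
have hgU := gP (j, U) hU; have := hU; rewrite inE => /andP[hUs _].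
rewrite /= in hgU; rewrite !inE hgU card_imgmx ?tvmx_free ?eqxx ?andbT //.
rewrite subspace_imgmx //=; apply/andP; split.
  apply: contra hX0 => /eqP hX0; apply/eqP/(imgmx_inj (tvmx_free (hzw j))).
  by rewrite hX0 imgmx_set0.
apply: contraL hXP => /setIidPr hPg; rewrite properEcard negb_and orbC -leqNgt.
by rewrite -(@card_imgmx _ _ (tvmx (w j) (z j)) X (tvmx_free (hzw j))) -hgU hPg leqnn.
Qed.

End RelativeToSubspace.

Section ShearCounting.
Variables (F : finFieldType) (n : nat).
Local Notation V := 'rV[F]_n.
Implicit Types (U : {set V}) (x y u v : V) (E D : 'M[F]_n).
Variable P : {set V}.
Hypothesis hP : subspace P.

(* For [E] in [shear P], [1 + E] is a unipotent map fixing [P] pointwise and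
   acting trivially on [V / P]; these maps permute [trivmeet P]. *)
Definition shear : {set 'M[F]_n} :=
  [set E | [forall v, v *m E \in P] && [forall y in P, y *m E == 0]].

Lemma shearP E :
  reflect ((forall v, v *m E \in P) /\ {in P, forall y, y *m E = 0}) (E \in shear).
Proof.
rewrite inE; apply: (iffP andP) => -[/forallP h1 h2]; split=> //.
  by move=> y /(forall_inP h2)/eqP.
by apply/forall_inP=> y /h2 ->.
Qed.

Lemma shear0 : 0 \in shear.
Proof. by apply/shearP; split=> [v|y _]; rewrite mulmx0 ?subspace0. Qed.

Lemma shearD : {in shear &, forall E D, E + D \in shear}.
Proof.
move=> E D /shearP[hE1 hE2] /shearP[hD1 hD2]; apply/shearP; split=> [v|y hy].
  by rewrite mulmxDr subspaceD.
by rewrite mulmxDr hE2 // hD2 // addr0.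
Qed.

Lemma shearN : {in shear, forall E, - E \in shear}.
Proof.
move=> E /shearP[hE1 hE2]; apply/shearP; split=> [v|y hy].
  by rewrite mulmxN subspaceN.
by rewrite mulmxN hE2 // oppr0.
Qed.

Lemma shearB : {in shear &, forall E D, E - D \in shear}.
Proof. by move=> E D hE hD; rewrite shearD ?shearN. Qed.

Lemma shear_mul0 E D : E \in shear -> D \in shear -> E *m D = 0.
Proof.
move=> /shearP[hE _] /shearP[_ hD]; apply/row_matrixP=> i.
by rewrite row_mul row0 hD // rowE hE.
Qed.

Lemma shear_mul1 E D : E \in shear -> D \in shear ->
  (1%:M + E) *m (1%:M + D) = 1%:M + (E + D).
Proof.
move=> hE hD; rewrite mulmxDl mul1mx mulmxDr mulmx1 shear_mul0 // addr0.
by rewrite addrAC addrA.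
Qed.

Lemma shear_free E : E \in shear -> row_free (1%:M + E).
Proof.
move=> hE; rewrite row_free_unit.
have h : (1%:M + E) *m (1%:M + - E) = 1%:M by rewrite shear_mul1 ?shearN // addrN addr0.
by case: (mulmx1_unit h).
Qed.

Lemma trivmeet_shear E U : E \in shear -> U \in trivmeet P -> imgmx (1%:M + E) U \in trivmeet P.
Proof.
move=> hE /(trivmeetP hP)[hU h0 [u hu hu0]]; have /shearP[hE1 hE2] := hE.
apply/(trivmeetP hP); split; first exact: subspace_imgmx.
  move=> _ /imsetP[v hv ->]; rewrite mulmxDr mulmx1 (subspaceDr hP _ (hE1 v)) => hvP.
  by rewrite (h0 v) // mul0mx addr0.
exists (u *m (1%:M + E)); first exact: mem_imgmx.
by apply: contra hu0 => /eqP h; apply/eqP/(row_free_inj (shear_free hE)); rewrite h mul0mx.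
Qed.

Variable T : {linear V -> V}.
Hypothesis hTP : {in P, forall x, T x \in P}.

(* [T (u (1 + D)) - T u (1 + D)] lies in [(1 + D) U] and in [P], which meet trivially. *)
Lemma invariant_shear_comm U D u : U \in invariants T -> U \in trivmeet P ->
  D \in shear -> imgmx (1%:M + D) U \in invariants T -> u \in U ->
  T (u *m D) = T u *m D.
Proof.
move=> /invariantsP[hU hTU] hUt hD /invariantsP[hDU hTDU] hu.
have /(trivmeetP hP)[_ h0 _] := trivmeet_shear hD hUt; have /shearP[hD1 _] := hD.
have e : T (u *m (1%:M + D)) - T u *m (1%:M + D) = T (u *m D) - T u *m D.
  by rewrite !mulmxDr !mulmx1 linearD opprD addrACA subrr add0r.
apply/eqP; rewrite -subr_eq0; apply/eqP; rewrite -e; apply: h0.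
  by apply: (subspaceB hDU); rewrite ?hTDU ?mem_imgmx ?hTU.
by rewrite e; apply: (subspaceB hP); rewrite ?hTP.
Qed.

Variables (J : finType) (x : J -> V).
Hypothesis hxP : forall j, x j \in P.
Hypothesis hxinj : forall mu : F, injective (fun j => T (x j) - mu *: x j).

Lemma card_shear_comm_le u : u \notin P ->
  (#|J| * #|[set D in shear | T (u *m D) == T u *m D]| <= #|shear|)%N.
Proof.
move=> hu; have [w [hPw huw]] := subspace_separate hP hu.
set K := [set D in shear | _].
pose mu := dotc (T u) w.
have hwx j : w *m x j \in shear.
  apply/shearP; split=> [v|y hy]; first by rewrite mulmx_dotc subspaceZ.
  by rewrite mulmx_dotc hPw // scale0r.
have defect D j : D \in K ->
    T (u *m (D + w *m x j)) - T u *m (D + w *m x j) = T (x j) - mu *: x j.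
  rewrite inE => /andP[_ /eqP hD].
  by rewrite !mulmxDr linearD hD !mulmx_dotc huw scale1r opprD addrACA subrr add0r.
pose f (Dj : 'M[F]_n * J) := Dj.1 + w *m x Dj.2.
have f_inj : {in setX K [set: J] &, injective f}.
  move=> [D j] [D' j'] /setXP[hD _] /setXP[hD' _]; rewrite /f /= => he.
  have hj : j = j'.
    by apply: (hxinj (mu := mu)); rewrite /= -(defect D j hD) -(defect D' j' hD') he.
  by subst j'; move/addIr: he => ->.
rewrite mulnC -cardsT -cardsX -(card_in_imset f_inj); apply: subset_leq_card.
apply/subsetP=> _ /imsetP[[D j] /setXP[hD _] ->].
by rewrite /f shearD //; case/setIdP: hD.
Qed.

Lemma card_shear_invariant_le U : U \in trivmeet P ->
  (#|J| * #|[set E in shear | imgmx (1%:M + E) U \in invariants T]| <= #|shear|)%N.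
Proof.
move=> hU; set A := [set E in shear | _].
have [->|[E0 hE0]] := set_0Vmem A; first by rewrite cards0 muln0.
have /setIdP[hE0s hE0I] := hE0.
have hU0 := trivmeet_shear hE0s hU; set U0 := imgmx _ U in hE0I hU0.
have /(trivmeetP hP)[_ h0 [u hu hu0]] := hU0.
have huP : u \notin P by apply: contra hu0 => h; rewrite (h0 _ hu h).
apply: leq_trans (card_shear_comm_le huP); rewrite leq_mul2l; apply/orP; right.
have sub_inj : {in A &, injective (fun E => E - E0)} by move=> ? ? _ _ /addIr.
rewrite -(card_in_imset sub_inj); apply: subset_leq_card.
apply/subsetP=> _ /imsetP[E /setIdP[hE hEI] ->].
rewrite inE shearB //=; apply/eqP/(invariant_shear_comm hE0I hU0) => //.
  exact: shearB.
by rewrite /U0 imgmx_comp shear_mul1 ?shearB // [E0 + _]addrC subrK.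
Qed.

Theorem card_invariants_trivmeet_le :
  (#|J| * #|invariants T :&: trivmeet P| <= #|trivmeet P|)%N.
Proof.
have hS : (0 < #|shear|)%N by apply/card_gt0P; exists 0; apply: shear0.
rewrite -(leq_pmul2r hS).
have back E : E \in shear ->
    (#|invariants T :&: trivmeet P| <=
     #|[set U in trivmeet P | imgmx (1%:M + E) U \in invariants T]|)%N.
  move=> hE; have hNE := shearN hE.
  have inj : {in invariants T :&: trivmeet P &, injective (imgmx (1%:M - E))}.
    by move=> ? ? _ _; apply: imgmx_inj; apply: shear_free.
  rewrite -(card_in_imset inj); apply: subset_leq_card.
  apply/subsetP=> _ /imsetP[W /setIP[hWI hWt] ->].
  by rewrite inE trivmeet_shear //= imgmx_comp shear_mul1 // addNr addr0 imgmx1.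
have swap : (\sum_(E in shear) #|[set U in trivmeet P | imgmx (1%:M + E) U \in invariants T]| =
    \sum_(U in trivmeet P) #|[set E in shear | imgmx (1%:M + E) U \in invariants T]|)%N.
  under eq_bigr do rewrite card_setId_sum.
  by rewrite exchange_big; apply: eq_bigr => U _; rewrite card_setId_sum.
have lhs : (#|invariants T :&: trivmeet P| * #|shear| <=
    \sum_(E in shear) #|[set U in trivmeet P | imgmx (1%:M + E) U \in invariants T]|)%N.
  by rewrite mulnC -sum_nat_const; apply: leq_sum => E /back.
rewrite -mulnA (leq_trans (leq_mul (leqnn _) lhs)) // swap big_distrr /=.
rewrite -[X in (_ <= X)%N]sum_nat_const; apply: leq_sum => U hU.
exact: card_shear_invariant_le.
Qed.

End ShearCounting.

Section ChainOfLength2.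
Variables (F : finFieldType) (n : nat).
Local Notation V := 'rV[F]_n.
Variables (T : {linear V -> V}) (a : V).
Hypotheses (hTTa : T (T a) = 0) (hTa : T a != 0).
Local Notation b := (T a).
Local Notation comb2 s t := (s *: a + t *: b).
Local Notation plane := (span2 a b).

Lemma T_comb2 s t : T (comb2 s t) = s *: b.
Proof. by rewrite linearD !linearZ /= hTTa scaler0 addr0. Qed.

Lemma comb2_inj s t s' t' : comb2 s t = comb2 s' t' -> s = s' /\ t = t'.
Proof.
move=> e; have hs : s = s' by move/(congr1 T): e; rewrite !T_comb2 => /scalerIv->.
by move: e; rewrite -hs => /addrI /scalerIv->.
Qed.

Lemma chain2_a_neq0 : a != 0. Proof. by apply: contraNneq hTa => ->; rewrite linear0. Qed.

Lemma chain2_stable : {in plane, forall y, T y \in plane}.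
Proof.
by move=> _ /span2P[s [t ->]]; rewrite T_comb2 (subsetP (line_sub_span2 a b)) ?line_scale.
Qed.

Lemma a_notin_line_b : a \notin line b.
Proof.
apply/negP=> /lineP[t e].
have := @comb2_inj 1 0 0 t; rewrite !scale0r addr0 add0r scale1r => /(_ e)[/eqP].
by rewrite oner_eq0.
Qed.

Lemma invariant_chain2 U : U \in invariants T :&: partmeet plane ->
  U \in meeting plane (line b).
Proof.
case/setIP=> /invariantsP[hU hTU]; rewrite inE => /and3P[_ hUP hPU].
have a_coord0 s t : comb2 s t \in U -> s = 0.
  move=> hst; apply: contraNeq hPU => hs.
  have hbU : b \in U by rewrite -(subspaceZK hU _ hs) -(T_comb2 s t) hTU.
  have haU : a \in U.
    by rewrite -(subspaceZK hU _ hs) -(subspaceDr hU _ (subspaceZ hU t hbU)).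
  by apply/subsetP=> _ /span2P[s' [t' ->]]; rewrite subspaceD ?subspaceZ.
have hbU : b \in U.
  have h0 : 0 \in U :&: plane by rewrite inE (subspace0 hU) (subspace0 (subspace_span2 _ _)).
  case/(subspace_neq0P h0): hUP => y /setIP[hst /span2P[s [t hy]]] ht0; subst y.
  have hs := a_coord0 _ _ hst; rewrite hs scale0r add0r in hst ht0.
  have ht : t != 0 by apply: contraNneq ht0 => ->; rewrite scale0r.
  by rewrite -(subspaceZK hU _ ht).
rewrite inE hU; apply/eqP/setP=> y; rewrite inE.
apply/andP/lineP=> [[hyU /span2P[s [t hy]]]|[t ->]].
  by subst y; exists t; rewrite (a_coord0 _ _ hyU) scale0r add0r.
by rewrite subspaceZ // (subsetP (line_sub_span2 a b)) // line_scale.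
Qed.

Lemma card_meeting_line_b : (#|F| * #|meeting plane (line b)| <= #|partmeet plane|)%N.
Proof.
have hb_a : b \notin line a.
  apply/negP=> /lineP[t e].
  have := @comb2_inj 0 1 t 0; rewrite !scale0r addr0 add0r scale1r => /(_ e)[_ /eqP].
  by rewrite oner_eq0.
have [wb [hawb hbwb]] := subspace_separate (subspace_line a) hb_a.
have hzw s : dotc a (s *: wb) = 0 by rewrite dotcZr hawb ?line_id ?mulr0.
have tv_line s t : (t *: b) *m tvmx (s *: wb) a = (t * s) *: a + t *: b.
  by rewrite tvmxE dotcZ dotcZr hbwb mulr1 addrC mulrC.
have tv_inj : injective (fun s => imgmx (tvmx (s *: wb) a) (line b)).
  move=> s s' /= e.
  have : (1 *: b) *m tvmx (s *: wb) a \in imgmx (tvmx (s' *: wb) a) (line b).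
    by rewrite -e mem_imgmx // scale1r line_id.
  case/imsetP=> _ /lineP[t ->]; rewrite !tv_line => /comb2_inj[e1 e2].
  by move: e1; rewrite -e2 !mul1r.
have hbP : line b \proper plane.
  by rewrite properE line_sub_span2; apply/subsetPn; exists a; rewrite ?a_notin_line_b ?span2_l.
have := card_partmeet_ge (subspace_span2 a b) (fun=> span2_l a b) hzw tv_inj (line_neq0 hTa) hbP.
by move/leq_trans; apply; apply: subset_leq_card; apply/subsetP=> W; rewrite inE => /andP[].
Qed.

Theorem card_invariants_chain2 : (3 <= n)%N ->
  (#|F| * #|invariants T| <= 2 * #|subspaces F n|)%N.
Proof.
move=> hn; have hP := subspace_span2 a b.
have [v hv] : exists v, v \notin plane.
  by apply/exists_notin/(leq_ltn_trans (card_span2 a b)); rewrite ltn_exp2l ?card_finNzRing_gt1.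
have hxP s : s *: a \in plane by rewrite subspaceZ ?span2_l.
have hxinj mu : injective (fun s => T (s *: a) - mu *: (s *: a)).
  have e r : T (r *: a) - mu *: (r *: a) = (- (mu * r)) *: a + r *: b.
    by rewrite linearZ scalerA scaleNr addrC.
  by move=> s s' /=; rewrite !e => /comb2_inj[].
apply: (card_invariants_le hP (C := meeting plane (line b))).
- by apply/(subspace_neq0P (subspace0 hP)); exists a; rewrite ?span2_l ?chain2_a_neq0.
- exact: invariant_chain2.
- by apply: (card_trivmeet_ge hP hv hxP) => s s' /scalerIv; apply; apply: chain2_a_neq0.
- exact: (card_invariants_trivmeet_le hP chain2_stable (x := fun s => s *: a) hxP hxinj).
- apply: card_supspaces_le (subspace_line b) (line_sub_span2 a b) (span2_l a b) a_notin_line_b _.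
  by move=> _ /span2P[s [t ->]]; exists s; rewrite addrAC subrr add0r line_scale.
- exact: card_meeting_line_b.
Qed.

End ChainOfLength2.

Section ChainOfLength3.
Variables (F : finFieldType) (n : nat).
Local Notation V := 'rV[F]_n.
Variables (T : {linear V -> V}) (a : V).
Hypotheses (hTTTa : T (T (T a)) = 0) (hTTa : T (T a) != 0).
Local Notation b := (T a).
Local Notation c := (T (T a)).
Local Notation comb3 s t r := (s *: a + t *: b + r *: c).
Local Notation space := (span3 a b c).
Local Notation plane := (span2 b c).

Lemma comb3D s t r s' t' r' :
  comb3 s t r + comb3 s' t' r' = comb3 (s + s') (t + t') (r + r').
Proof. by rewrite !scalerDl addrACA (addrACA (s *: a)). Qed.

Lemma comb3Z k s t r : k *: comb3 s t r = comb3 (k * s) (k * t) (k * r).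
Proof. by rewrite !scalerDr !scalerA. Qed.

Lemma comb3B s t r s' t' r' :
  comb3 s t r - comb3 s' t' r' = comb3 (s - s') (t - t') (r - r').
Proof. by rewrite -scaleN1r comb3Z comb3D !mulN1r. Qed.

Lemma comb3_bc t r : comb3 0 t r = t *: b + r *: c.
Proof. by rewrite scale0r add0r. Qed.

Lemma comb3_c r : comb3 0 0 r = r *: c.
Proof. by rewrite !scale0r !add0r. Qed.

Lemma T_comb3 s t r : T (comb3 s t r) = comb3 0 s t.
Proof. by rewrite !linearD !linearZ /= hTTTa scaler0 addr0 comb3_bc. Qed.

Lemma comb3_inj s t r s' t' r' :
  comb3 s t r = comb3 s' t' r' -> [/\ s = s', t = t' & r = r'].
Proof.
move=> e; have e1 := congr1 T e; have e2 := congr1 T e1.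
rewrite !T_comb3 !comb3_bc in e1 e2; rewrite !scale0r !add0r in e2.
have hs := scalerIv hTTa e2; rewrite hs in e e1.
have ht := scalerIv hTTa (addrI _ e1); rewrite ht in e.
by split=> //; apply: scalerIv hTTa (addrI _ e).
Qed.

Lemma chain3_a_neq0 : a != 0.
Proof. by apply: contraNneq hTTa => ->; rewrite !linear0. Qed.

Lemma chain3_stable : {in space, forall y, T y \in space}.
Proof. by move=> _ /span3P[s [t [r ->]]]; rewrite T_comb3 mem_span3. Qed.

Lemma invariant_chain3 U : U \in invariants T :&: partmeet space ->
  U \in meeting space (line c) :|: meeting space plane.
Proof.
case/setIP=> /invariantsP[hU hTU]; rewrite inE => /and3P[_ hUP hPU].
have TU s t r : comb3 s t r \in U -> comb3 0 s t \in U.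
  by move/hTU; rewrite T_comb3.
have a_coord0 s t r : comb3 s t r \in U -> s = 0.
  move=> hy; apply: contraNeq hPU => hs.
  have hcU : c \in U by rewrite -(subspaceZK hU _ hs) -comb3_c (TU _ _ _ (TU _ _ _ hy)).
  have hbU : b \in U.
    move: (hTU _ hy); rewrite T_comb3 comb3_bc (subspaceDr hU _ (subspaceZ hU t hcU)).
    by rewrite (subspaceZK hU _ hs).
  move: hy; rewrite (subspaceDr hU _ (subspaceZ hU r hcU)).
  rewrite (subspaceDr hU _ (subspaceZ hU t hbU)) (subspaceZK hU _ hs) => haU.
  by apply/subsetP=> _ /span3P[s' [t' [r' ->]]]; rewrite !subspaceD ?subspaceZ.
have hcU : c \in U.
  have h0 : 0 \in U :&: space by rewrite inE (subspace0 hU) (subspace0 (subspace_span3 _ _ _)).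
  case/(subspace_neq0P h0): hUP => y /setIP[hyU /span3P[s [t [r hy]]]] hy0; subst y.
  have hs := a_coord0 _ _ _ hyU; rewrite hs in hyU hy0.
  have [ht0|ht] := eqVneq t 0; last by rewrite -(subspaceZK hU _ ht) -comb3_c (TU _ _ _ hyU).
  rewrite ht0 comb3_c in hyU hy0.
  have hr : r != 0 by apply: contraNneq hy0 => ->; rewrite scale0r.
  by rewrite -(subspaceZK hU _ hr).
rewrite !inE hU /=; have [hbU|hbU] := boolP (b \in U); apply/orP; [right|left];
  apply/eqP/setP=> y; rewrite inE.
- apply/andP/span2P=> [[hyU /span3P[s [t [r hy]]]]|[t [r ->]]].
    by subst y; exists t, r; rewrite (a_coord0 _ _ _ hyU) comb3_bc.
  by rewrite -comb3_bc mem_span3 comb3_bc subspaceD ?subspaceZ.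
- apply/andP/lineP=> [[hyU /span3P[s [t [r hy]]]]|[r ->]].
    subst y; have hs := a_coord0 _ _ _ hyU; rewrite hs comb3_bc in hyU *.
    have [ht0|ht] := eqVneq t 0; first by exists r; rewrite ht0 scale0r add0r.
    case/negP: hbU; rewrite -(subspaceZK hU _ ht).
    by rewrite -(subspaceDr hU _ (subspaceZ hU r hcU)).
  split; first exact: subspaceZ.
  by apply/(subsetP (span2_sub_span3 a b c))/(subsetP (line_sub_span2 b c))/line_scale.
Qed.

Lemma comb3_a : comb3 1 0 0 = a.
Proof. by rewrite scale1r !scale0r !addr0. Qed.

Lemma comb3_b : comb3 0 1 0 = b.
Proof. by rewrite scale1r !scale0r add0r addr0. Qed.

Lemma comb3_ab s t : comb3 s t 0 = s *: a + t *: b.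
Proof. by rewrite scale0r addr0. Qed.

Lemma comb3_ac s r : comb3 s 0 r = s *: a + r *: c.
Proof. by rewrite scale0r addr0. Qed.

Lemma a_notin_plane : a \notin plane.
Proof.
apply/negP=> /span2P[t [r e]].
have := @comb3_inj 1 0 0 0 t r; rewrite comb3_a comb3_bc => /(_ e)[/eqP].
by rewrite oner_eq0.
Qed.

Lemma plane_proper : plane \proper space.
Proof.
by rewrite properE span2_sub_span3; apply/subsetPn; exists a; rewrite ?span3_l ?a_notin_plane.
Qed.

Lemma line_c_proper : line c \proper plane.
Proof.
rewrite properE line_sub_span2; apply/subsetPn; exists b; rewrite ?span2_l //.
apply/negP=> /lineP[r e].
have := @comb3_inj 0 1 0 0 0 r; rewrite comb3_b comb3_c => /(_ e)[_ /eqP].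
by rewrite oner_eq0.
Qed.

Lemma chain3_dual_b : exists wb, [/\ dotc a wb = 0, dotc b wb = 1 & dotc c wb = 0].
Proof.
have : b \notin span2 a c.
  apply/negP=> /span2P[s [t e]].
  have := @comb3_inj 0 1 0 s 0 t; rewrite comb3_b comb3_ac => /(_ e)[_ /eqP].
  by rewrite oner_eq0.
case/(subspace_separate (subspace_span2 a c))=> wb [hac hb]; exists wb.
by rewrite hb !hac ?span2_l ?span2_r.
Qed.

Lemma chain3_dual_c : exists wc, [/\ dotc a wc = 0, dotc b wc = 0 & dotc c wc = 1].
Proof.
have : c \notin span2 a b.
  apply/negP=> /span2P[s [t e]].
  have := @comb3_inj 0 0 1 s t 0; rewrite comb3_c scale1r comb3_ab => /(_ e)[_ _ /eqP].
  by rewrite oner_eq0.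
case/(subspace_separate (subspace_span2 a b))=> wc [hab hc]; exists wc.
by rewrite hc !hab ?span2_l ?span2_r.
Qed.

Lemma card_meeting_line_c : (#|F| ^ 2 * #|meeting space (line c)| <=
  #|[set W in partmeet space | #|W :&: space| == #|line c|]|)%N.
Proof.
have [wc [awc bwc cwc]] := chain3_dual_c.
pose z (j : F * F) := comb3 j.1 j.2 0.
have zw j : dotc (z j) wc = 0 by rewrite !dotcD !dotcZ awc bwc !mulr0 mul0r !addr0.
have tv r j : (r *: c) *m tvmx wc (z j) = comb3 (r * j.1) (r * j.2) r.
  by rewrite /z tvmxE dotcZ cwc mulr1 comb3Z mulr0 -{1}(comb3_c r) comb3D !add0r addr0.
have tv_inj : injective (fun j => imgmx (tvmx wc (z j)) (line c)).
  move=> [s t] [s' t'] /= e.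
  have : (1 *: c) *m tvmx wc (z (s, t)) \in imgmx (tvmx wc (z (s', t'))) (line c).
    by rewrite -e mem_imgmx // scale1r line_id.
  case/imsetP=> _ /lineP[r ->]; rewrite !tv /= => /comb3_inj[e1 e2 e3].
  by rewrite -e3 !mul1r in e1 e2; rewrite e1 e2.
have hlP := sub_proper_trans (proper_sub line_c_proper) plane_proper.
rewrite -mulnn -card_prod.
have zP j : z j \in space by apply: mem_span3.
exact: (card_partmeet_ge (subspace_span3 a b c) (w := fun=> wc) zP zw tv_inj (line_neq0 hTTa) hlP).
Qed.

Lemma card_meeting_plane : (#|F| ^ 2 * #|meeting space plane| <=
  #|[set W in partmeet space | #|W :&: space| == #|plane|]|)%N.
Proof.
have [wb [awb bwb cwb]] := chain3_dual_b; have [wc [awc bwc cwc]] := chain3_dual_c.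
pose w (j : F * F) := j.1 *: wb + j.2 *: wc.
have aw j : dotc a (w j) = 0 by rewrite dotcDr !dotcZr awb awc !mulr0 addr0.
have tv t r j : (t *: b + r *: c) *m tvmx (w j) a = comb3 (t * j.1 + r * j.2) t r.
  rewrite tvmxE dotcD !dotcZ !dotcDr !dotcZr bwb bwc cwb cwc.
  by rewrite !mulr0 !mulr1 addr0 add0r addrC addrA.
have tv_inj : injective (fun j => imgmx (tvmx (w j) a) plane).
  move=> [s t] [s' t'] /= e.
  have img y : y \in plane -> y *m tvmx (w (s, t)) a \in imgmx (tvmx (w (s', t')) a) plane.
    by move=> hy; rewrite -e mem_imgmx.
  case/imsetP: (img _ (mem_span2 b c 1 0)) => _ /span2P[u [v ->]].
  rewrite !tv /= => /comb3_inj[e1 e2 e3].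
  case/imsetP: (img _ (mem_span2 b c 0 1)) => _ /span2P[u' [v' ->]].
  rewrite !tv /= => /comb3_inj[e1' e2' e3'].
  rewrite -e2 -e3 -e2' -e3' !mul1r !mul0r !addr0 !add0r in e1 e1'.
  by rewrite e1 e1'.
have hp0 : plane != [set 0].
  by apply/(subspace_neq0P (subspace0 (subspace_span2 b c))); exists c; rewrite ?span2_r.
rewrite -mulnn -card_prod.
exact: (card_partmeet_ge (subspace_span3 a b c) (w := w) (z := fun=> a) (fun=> span3_l a b c)
  aw tv_inj hp0 plane_proper).
Qed.

Lemma card_meeting_chain3 : (#|F| ^ 2 *
  #|meeting space (line c) :|: meeting space plane| <= #|partmeet space|)%N.
Proof.
apply: leq_trans (leq_mul (leqnn _) (leq_card_setU _ _).1) _.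
rewrite mulnDr; apply: leq_trans (leq_add card_meeting_line_c card_meeting_plane) _.
by apply: leq_card_fibers; rewrite neq_ltn proper_card ?line_c_proper.
Qed.

Theorem card_invariants_chain3 : (4 <= n)%N ->
  (#|F| ^ 2 * #|invariants T| <= 2 * #|subspaces F n|)%N.
Proof.
move=> hn; have hP := subspace_span3 a b c.
have [v hv] : exists v, v \notin space.
  by apply/exists_notin/(leq_ltn_trans (card_span3 a b c)); rewrite ltn_exp2l ?card_finNzRing_gt1.
pose x (j : F * F) := comb3 j.1 j.2 0.
have hxP j : x j \in space by apply: mem_span3.
have x_inj : injective x by move=> [s t] [s' t'] /comb3_inj[/= -> ->].
have hxinj mu : injective (fun j => T (x j) - mu *: x j).
  move=> [s t] [s' t'] /=; rewrite !T_comb3 !comb3Z !comb3B => /comb3_inj[_ /= e2 e3].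
  rewrite !mulr0 !subr0 in e3; rewrite e3 in e2 *.
  by rewrite (addIr _ e2).
apply: (card_invariants_le hP (C := meeting space (line c) :|: meeting space plane)).
- by apply/(subspace_neq0P (subspace0 hP)); exists a; rewrite ?span3_l ?chain3_a_neq0.
- exact: invariant_chain3.
- by have := card_trivmeet_ge hP hv hxP x_inj; rewrite card_prod mulnn.
- have := card_invariants_trivmeet_le hP chain3_stable hxP hxinj.
  by rewrite card_prod mulnn.
- apply: leq_trans (subset_leq_card (subsetUr _ _)).
  apply: card_supspaces_le (subspace_span2 b c) (span2_sub_span3 a b c) (span3_l a b c)
    a_notin_plane _.
  move=> _ /span3P[s [t [r ->]]]; exists s.
  by rewrite addrC !addrA addNr add0r mem_span2.
- exact: card_meeting_chain3.
Qed.

End ChainOfLength3.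

Section CommutativeAlgebra.
Variables (p n : nat).
Local Notation V := 'rV['F_p]_n.
Variable mul : V -> V -> V.
Hypothesis halg : is_comm_alg mul.

Lemma alg_mulC x y : mul x y = mul y x. Proof. by case: halg. Qed.
Lemma alg_mulA x y z : mul x (mul y z) = mul (mul x y) z. Proof. by case: halg. Qed.

Lemma mul_is_linear x : linear (mul x).
Proof. by move=> k u v; rewrite alg_mulC; case: halg => -> _ _; rewrite !(alg_mulC _ x). Qed.

Definition lmul x : {linear V -> V} :=
  HB.pack (mul x) (GRing.isLinear.Build _ _ _ _ (mul x) (mul_is_linear x)).

Lemma alg_mulDr x y z : mul x (y + z) = mul x y + mul x z.
Proof. exact: (linearD (lmul x)). Qed.

Lemma alg_mulDl x y z : mul (x + y) z = mul x z + mul y z.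
Proof. by rewrite !(alg_mulC _ z) alg_mulDr. Qed.

Lemma ideals_sub_invariants x : [set U | is_ideal mul U] \subset invariants (lmul x).
Proof.
apply/subsetP=> U; rewrite inE => /andP[hU /forallP hI].
by apply/invariantsP; split=> // u; apply/(forall_inP (hI x)).
Qed.

Lemma alg_pow_prod k x (t : (k.-1).-tuple V) : foldl mul x t \in alg_pow mul k.
Proof.
apply: memv_span; apply: (allpairs_f (fun x (s : (k.-1).-tuple V) => foldl mul x s)).
  by rewrite mem_enum.
by rewrite mem_enum in_setT.
Qed.

Lemma alg_pow_neq0 k : alg_pow mul k != 0%VS ->
  exists x (t : (k.-1).-tuple V), foldl mul x t != 0.
Proof.
move=> hk; have : [exists x, exists t : (k.-1).-tuple V, foldl mul x t != 0].
  apply: contraR hk => /existsPn hnone; rewrite -subv0.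
  apply/span_subvP=> _ /allpairsP[[x t] [_ _ ->]]; rewrite memv0.
  by move/existsPn: (hnone x) => /(_ t) /negPn.
by case/existsP=> x /existsP[t ht]; exists x, t.
Qed.

Lemma alg_pow3_eq0 : alg_pow mul 3 = 0%VS -> forall x y z, mul x (mul y z) = 0.
Proof.
move=> h x y z; apply/eqP; rewrite -memv0 -h alg_mulA.
exact: (alg_pow_prod (k := 3) x [tuple y; z]).
Qed.

Lemma alg_pow4_eq0 : alg_pow mul 4 = 0%VS -> forall x y z w, mul x (mul y (mul z w)) = 0.
Proof.
move=> h x y z w; apply/eqP; rewrite -memv0 -h !alg_mulA.
exact: (alg_pow_prod (k := 4) x [tuple y; z; w]).
Qed.

Lemma alg_pow2_neq0 : alg_pow mul 2 != 0%VS -> exists x y, mul x y != 0.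
Proof. by case/alg_pow_neq0=> x [[[|y []] //] _ /= hxy]; exists x, y. Qed.

Lemma alg_pow3_neq0 : alg_pow mul 3 != 0%VS -> exists x y z, mul x (mul y z) != 0.
Proof.
case/alg_pow_neq0=> x [[[|y [|z []]] //] _ /= hxyz].
by exists x, y, z; rewrite alg_mulA.
Qed.

(* Polarization: if [u (u v)] vanished identically then [2 x (y z) = 0], and [2 != 0]. *)
Lemma exists_mul_sq_neq0 : prime p -> (2 < p)%N -> alg_pow mul 3 != 0%VS ->
  exists u v, mul u (mul u v) != 0.
Proof.
move=> hp hp2 /alg_pow3_neq0[x [y [z hxyz]]].
have : [exists u, exists v, mul u (mul u v) != 0].
  apply: contraR hxyz => /existsPn hnone.
  have sq0 u v : mul u (mul u v) = 0 by move/existsPn: (hnone u) => /(_ v) /negPn /eqP.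
  have := sq0 (x + y) z; rewrite !alg_mulDl !alg_mulDr !sq0 add0r addr0.
  rewrite (alg_mulA y) (alg_mulC y x) -alg_mulA -mulr2n -scaler_nat => /eqP.
  rewrite scaler_eq0 -(dvdn_pcharf (pchar_Fp hp)) => /orP[/dvdn_leq|//].
  by move=> /(_ isT); rewrite leqNgt hp2.
by case/existsP=> u /existsP[v huv]; exists u, v.
Qed.

End CommutativeAlgebra.

Lemma ler_nat_ratio (i s q : nat) : (0 < q)%N -> (q * i <= 2 * s)%N ->
  i%:R <= 2%:R / q%:R * s%:R :> rat.
Proof.
move=> hq h; rewrite mulrAC ler_pdivlMr ?ltr0n //.
by rewrite -!natrM ler_nat mulnC.
Qed.

Theorem proposition2p9 (p n : nat) (hp : prime p)
  (mul : 'rV['F_p]_n -> 'rV['F_p]_n -> 'rV['F_p]_n)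
  (halg : is_comm_alg mul)
  (hAp : alg_pow mul p = 0%VS)
  (e : nat) (he1 : (1 <= e)%N)
  (he : alg_pow mul e != 0%VS) (he' : alg_pow mul e.+1 = 0%VS) :
  (e = 2%N -> (3 <= p)%N -> (3 <= n)%N ->
     (num_ideals mul)%:R <= (2%:R / p%:R) * (num_subspaces p n)%:R :> rat) /\
  (e = 3%N -> (3 <= p)%N -> (4 <= n)%N ->
     (num_ideals mul)%:R <= (2%:R / (p ^ 2)%N%:R) * (num_subspaces p n)%:R :> rat).
Proof.
have hq : #|'F_p| = p := card_Fp hp.
have ideals_le x : (num_ideals mul <= #|invariants (lmul halg x)|)%N.
  exact/subset_leq_card/ideals_sub_invariants.
split=> e_val hp3 hn; subst e.
- have [x [y hxy]] := alg_pow2_neq0 he.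
  have hxxy : mul x (mul x y) = 0 := alg_pow3_eq0 halg he' x x y.
  apply: ler_nat_ratio; first exact: prime_gt0.
  have := card_invariants_chain2 (T := lmul halg x) hxxy hxy hn.
  by rewrite hq; apply: leq_trans; rewrite leq_mul2l ideals_le orbT.
- have [u [v huv]] := exists_mul_sq_neq0 halg hp hp3 he.
  have huuuv : mul u (mul u (mul u v)) = 0 := alg_pow4_eq0 halg he' u u u v.
  apply: ler_nat_ratio; first by rewrite expn_gt0 prime_gt0.
  have := card_invariants_chain3 (T := lmul halg u) huuuv huv hn.
  by rewrite hq; apply: leq_trans; rewrite leq_mul2l ideals_le orbT.
Qed.
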